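(* Let $G$ be a line graph with vertex order $v_1,\ldots,v_n$, let $D$ be a minimal dominating set of $G$, let $u,w\in D$ be adjacent, let $v\in P_D(u)$, and let $X_{uv}$, $D^*$, $Z_{uv}$ be as in the context. Then: $X_{uv}=\emptyset$; each vertex of $Z_{uv}$ is adjacent to exactly one vertex of $P_{D^*}(v)\setminus N[u]$; and each vertex of $P_{D^*}(v)\setminus N[u]$ is adjacent to exactly one vertex of $Z_{uv}$.
   Context: Graphs are finite, simple, undirected; $N(x)$ is the open and $N[x]=N(x)\cup\{x\}$ the closed neighborhood, $N[S]=\bigcup_{x\in S}N[x]$. A line graph is a graph isomorphic to $L(H)$ for some graph $H$, where $L(H)$ has vertex set $E(H)$ and two vertices are adjacent iff the edges share an endpoint. A dominating set is $D\subseteq V(G)$ with $N[D]=V(G)$; it is minimal if no proper subset is dominating. For a dominating set $D$ and $x\in D$, a vertex $y$ is private for $x$ if $y\in N[x]\setminus N[D\setminus\{x\}]$; $P_D[x]$ is the set of such $y$ and $P_D(x)=P_D[x]\cap N(x)$. Fix an order $v_1,\ldots,v_n$ of $V(G)$. Greedy removal from a dominating set $D'$: while the current set $S$ is not a minimal dominating set, remove from $S$ the vertex $v_i$ of smallest index such that $S\setminus\{v_i\}$ is still dominating. Given $D,u,v$: $X_{uv}$ is built by starting from $\emptyset$ and repeatedly adding the smallest-index vertex of $P_D(u)\setminus N[\{v\}\cup X_{uv}]$ while this set is nonempty. Let $D'=(D\setminus\{u\})\cup X_{uv}\cup\{v\}$, let $D^*$ be the result of greedy removal from $D'$, and $Z_{uv}=D'\setminus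 D^*$. *)

(* Graphs on vertex set 'I_n; the vertex order v_1,...,v_n is
   the natural order of 'I_n (v_{i+1} = the ordinal i). *)
From mathcomp Require Import all_boot.
Set Implicit Arguments. Unset Strict Implicit. Unset Printing Implicit Defensive.

Section Defs.
Variable n : nat.
Implicit Types (e : rel 'I_n) (S D X : {set 'I_n}) (x y u v : 'I_n).

Definition onbr e x : {set 'I_n} := [set y | e x y].
Definition cnbr e x : {set 'I_n} := [set y | (y == x) || e x y].
Definition cnbrS e S : {set 'I_n} := \bigcup_(x in S) cnbr e x.

Definition dominating e D : bool := cnbrS e D == [set: 'I_n].
Definition minimal_dominating e D : bool :=
  dominating e D && [forall D' : {set 'I_n}, (D' \proper D) ==> ~~ dominating e D'].

Definition priv_closed e D x : {set 'I_n} := cnbr e x :\: cnbrS e (D :\ x).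
Definition priv_open e D x : {set 'I_n} := priv_closed e D x :&: onbr e x.

Definition minpick (A : {set 'I_n}) : option 'I_n :=
  [pick x in A | [forall y in A, (x <= y)%N]].

Definition greedy_step e S : {set 'I_n} :=
  if minimal_dominating e S then S else
  match minpick [set x in S | dominating e (S :\ x)] with
  | Some x => S :\ x
  | None => S
  end.
(* each non-trivial step removes a vertex, so #|'I_n| iterations reach the end *)
Definition greedy_removal e S : {set 'I_n} := iter n.+1 (greedy_step e) S.

Definition X_step e D u v X : {set 'I_n} :=
  match minpick (priv_open e D u :\: cnbrS e (v |: X)) with
  | Some x => x |: X
  | None => X
  end.
Definition X_uv e D u v : {set 'I_n} := iter n.+1 (X_step e D u v) set0.

Definition D' e D u v : {set 'I_n} := ((D :\ u) :|: X_uv e D u v) :|: [set v].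
Definition Dstar e D u v : {set 'I_n} := greedy_removal e (D' e D u v).
Definition Z_uv e D u v : {set 'I_n} := D' e D u v :\: Dstar e D u v.

End Defs.

(* G (adjacency e on 'I_n) is a line graph: isomorphic to L(H) for a finite simple
   graph H on 'I_m, via f mapping each vertex of G to an edge {a,b} of H. *)
Definition is_line_graph (n : nat) (e : rel 'I_n) : Prop :=
  exists (m : nat) (eH : rel 'I_m) (f : 'I_n -> {set 'I_m}),
    (symmetric eH /\ irreflexive eH) /\
    [/\ injective f,
        (forall x, exists a b, eH a b /\ f x = [set a; b]),
        (forall a b, eH a b -> exists x, f x = [set a; b]) &
        (forall x y, e x y = (x != y) && (f x :&: f y != set0))].

From mathcomp Require Import all_boot.
Set Implicit Arguments. Unset Strict Implicit. Unset Printing Implicit Defensive.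

(* A vertex of a line graph is an edge with two endpoints; a neighbour [w] of [x] uses
   one of them, so every neighbour of [x] outside [N[w]] contains the other one. For
   [x = u] this makes [P_D(u)] a clique through [v], so [X_uv] is empty and
   [D' = D - u + v]. Every vertex of [P_{D*}(v) - N[u]] contains the endpoint of [v]
   missing [u]; if it is adjacent to [z] in [Z_uv], it also contains the endpoint of [z]
   missing the dominator of [z] in [D*]. A vertex is determined by its two endpoints,
   which gives the uniqueness claims, while a private neighbour of [z] for [D]
   provides existence. *)

Section Domination.
Variables (n : nat) (e : rel 'I_n).
Implicit Types (S T D : {set 'I_n}) (x y u v w : 'I_n).

Lemma cnbrSP S y : reflect (exists2 x, x \in S & y \in cnbr e x) (y \in cnbrS e S).
Proof. exact: bigcupP. Qed.

Lemma cnbrS_cnbr S x y : x \in S -> y \in cnbr e x -> y \in cnbrS e S.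
Proof. by move=> xS yx; apply/cnbrSP; exists x. Qed.

Lemma cnbrSS S T : S \subset T -> cnbrS e S \subset cnbrS e T.
Proof.
by move=> /subsetP ST; apply/subsetP=> y /cnbrSP[x /ST xT yx]; apply: cnbrS_cnbr yx.
Qed.

Lemma cnbrS1 x : cnbrS e [set x] = cnbr e x.
Proof. exact: big_set1. Qed.

Lemma dominatingP S : reflect (forall y, y \in cnbrS e S) (dominating e S).
Proof.
apply: (iffP eqP) => [-> y | domS]; first by rewrite inE.
by apply/setP=> y; rewrite inE domS.
Qed.

Lemma greedy_step_sub S : greedy_step e S \subset S.
Proof.
rewrite /greedy_step; case: ifP => _; first exact: subxx.
rewrite /minpick; case: pickP => [x _ | _]; [exact: subD1set | exact: subxx].
Qed.

Lemma greedy_step_dominating S : dominating e S -> dominating e (greedy_step e S).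
Proof.
rewrite /greedy_step => domS; case: ifP => // _.
by rewrite /minpick; case: pickP => // x /andP[]; rewrite inE => /andP[].
Qed.

Lemma greedy_removal_sub S : greedy_removal e S \subset S.
Proof.
rewrite /greedy_removal; elim: n.+1 => [|k IHk] /=; first exact: subxx.
exact: subset_trans (greedy_step_sub _) IHk.
Qed.

Lemma greedy_removal_dominating S : dominating e S -> dominating e (greedy_removal e S).
Proof.
by rewrite /greedy_removal => domS; elim: n.+1 => //= k; apply: greedy_step_dominating.
Qed.

Lemma minimal_dominating_priv D x :
  minimal_dominating e D -> x \in D -> exists p, p \in priv_closed e D x.
Proof.
case/andP=> /dominatingP domD /forallP minD xD.
have /negP ndom := implyP (minD (D :\ x)) (properD1 xD).
have [p p_out] : exists p, p \notin cnbrS e (D :\ x).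
  apply/existsP; apply: contra_notT ndom => /existsPn all_in.
  by apply/dominatingP=> p; exact/negbNE/all_in.
exists p; rewrite inE p_out /=; case/cnbrSP: (domD p) => y yD py.
have [<- // | yx] := eqVneq y x.
by case/negP: p_out; apply: cnbrS_cnbr py; rewrite !inE yx.
Qed.

Lemma X_uv_eq0 D u v : priv_open e D u \subset cnbr e v -> X_uv e D u v = set0.
Proof.
move=> Pu_sub; rewrite /X_uv; elim: n.+1 => //= k ->.
rewrite /X_step setU0 cnbrS1 /minpick; case: pickP => // x /andP[].
by move: Pu_sub; rewrite -setD_eq0 => /eqP->; rewrite inE.
Qed.

Lemma exchange_dominating D u v w :
  dominating e D -> w \in D :\ u -> u \in cnbr e w ->
  priv_open e D u \subset cnbr e v -> dominating e (D :\ u :|: [set v]).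
Proof.
move=> /dominatingP domD wDu uw /subsetP Pu_sub; apply/dominatingP=> y.
have sub : D :\ u \subset D :\ u :|: [set v] by exact: subsetUl.
case: (boolP (y \in cnbrS e (D :\ u))) => [|y_out]; first exact: (subsetP (cnbrSS sub)).
have [-> | yu] := eqVneq y u; first exact: cnbrS_cnbr (subsetP sub _ wDu) uw.
case/cnbrSP: (domD y) => x xD yx.
have [exu | xu] := eqVneq x u; last first.
  by apply: (subsetP (cnbrSS sub)); apply: cnbrS_cnbr yx; rewrite !inE xu.
apply: (@cnbrS_cnbr _ v); first by rewrite !inE eqxx orbT.
apply: Pu_sub; rewrite /priv_open /priv_closed !inE y_out -exu.
by move: yx; rewrite exu inE (negbTE yu) /= => ->.
Qed.

End Domination.

Section LineGraph.
Variables (n m : nat) (e : rel 'I_n) (f : 'I_n -> {set 'I_m}).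
Hypothesis f_inj : injective f.
Hypothesis f_pair : forall x, exists a b, f x = [set a; b].
Hypothesis e_meet : forall x y, e x y = (x != y) && (f x :&: f y != set0).
Implicit Types (x y z w a b p : 'I_n) (s t : 'I_m).

Lemma line_sym : symmetric e.
Proof. by move=> x y; rewrite !e_meet eq_sym setIC. Qed.

Lemma line_neq x y : e x y -> x != y.
Proof. by rewrite e_meet => /andP[]. Qed.

Lemma line_cnbrC x y : (y \in cnbr e x) = (x \in cnbr e y).
Proof. by rewrite !inE eq_sym line_sym. Qed.

Lemma line_meet x y : e x y -> exists2 t, t \in f x & t \in f y.
Proof. by rewrite e_meet => /andP[_ /set0Pn[t]]; rewrite inE => /andP[]; exists t. Qed.

Lemma line_cnbr x y t : t \in f x -> t \in f y -> y \in cnbr e x.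
Proof.
move=> tx ty; rewrite inE e_meet; case: eqVneq => //= _.
by apply/set0Pn; exists t; rewrite inE tx ty.
Qed.

Lemma line_endpoints x s t : s != t -> s \in f x -> t \in f x -> f x = [set s; t].
Proof.
move=> st sx tx; have [a [b fx]] := f_pair x.
apply/esym/eqP; rewrite eqEcard cards2 st; apply/andP; split.
  by apply/subsetP=> r; rewrite !inE => /orP[]/eqP->.
by rewrite fx cards2; case: (a != b).
Qed.

Lemma line_eq x y s t : s != t ->
  s \in f x -> t \in f x -> s \in f y -> t \in f y -> x = y.
Proof.
move=> st sx tx sy ty; apply: f_inj.
by rewrite (line_endpoints st sx tx) (line_endpoints st sy ty).
Qed.

Lemma line_outer_endpoint x w s t : e x w ->
  s \in f x -> t \in f x -> s \notin f w -> t \notin f w -> s = t.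
Proof.
move=> exw sx tx sw tw; apply/eqP; apply: contraT => st.
have [r rx rw] := line_meet exw.
by move: rx; rewrite (line_endpoints st sx tx) => /set2P[] Er;
  [move: sw | move: tw]; rewrite -Er rw.
Qed.

Lemma line_outer_nbr_endpoint x w y1 y2 s t : e x w ->
  y1 \notin cnbr e w -> y2 \notin cnbr e w ->
  s \in f x -> s \in f y1 -> t \in f x -> t \in f y2 -> s = t.
Proof.
move=> exw y1w y2w sx sy1 tx ty2; apply: (line_outer_endpoint exw sx tx).
- by apply: contra y1w => sw; apply: line_cnbr sw sy1.
- by apply: contra y2w => tw; apply: line_cnbr tw ty2.
Qed.

Lemma line_nbr_cover x a b p s t : s != t ->
  s \in f x -> s \in f a -> t \in f x -> t \in f b -> e x p ->
  (p \in cnbr e a) || (p \in cnbr e b).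
Proof.
move=> st sx sa tx tb /line_meet[r]; rewrite (line_endpoints st sx tx).
by case/set2P=> -> rp; [rewrite (line_cnbr sa rp) | rewrite (line_cnbr tb rp) orbT].
Qed.

Section Exchange.
Variables (D : {set 'I_n}) (u w v : 'I_n).
Hypothesis D_min : minimal_dominating e D.
Hypotheses (uD : u \in D) (wD : w \in D) (euw : e u w).
Hypothesis v_priv : v \in priv_open e D u.

Let Ds := Dstar e D u v.
Let Z := Z_uv e D u v.
Let Y := priv_open e Ds v :\: cnbr e u.

Lemma u_adj_v : e u v.
Proof. by case/setIP: v_priv => _; rewrite inE. Qed.

Lemma v_not_cnbr x : x \in D :\ u -> v \notin cnbr e x.
Proof.
case/setIP: v_priv => /setDP[_ v_out] _ xDu.
by apply: contra v_out; apply: cnbrS_cnbr.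
Qed.

Lemma v_notin_D : v \notin D.
Proof.
apply/negP=> vD; have /v_not_cnbr : v \in D :\ u by rewrite !inE eq_sym line_neq ?u_adj_v.
by rewrite inE eqxx.
Qed.

Lemma w_in_Du : w \in D :\ u.
Proof. by rewrite !inE wD eq_sym line_neq. Qed.

Lemma priv_open_sub_cnbr : priv_open e D u \subset cnbr e v.
Proof.
apply/subsetP=> p /setIP[/setDP[_ p_out]]; rewrite inE => eup.
have p_w : p \notin cnbr e w by apply: contra p_out; apply: cnbrS_cnbr w_in_Du.
have [s su sp] := line_meet eup; have [t tu tv] := line_meet u_adj_v.
have st := line_outer_nbr_endpoint euw p_w (v_not_cnbr w_in_Du) su sp tu tv.
by apply: (line_cnbr tv); rewrite -st.
Qed.

Lemma X_uv0 : X_uv e D u v = set0.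
Proof. exact: X_uv_eq0 priv_open_sub_cnbr. Qed.

Lemma D'_eq : D' e D u v = D :\ u :|: [set v].
Proof. by rewrite /D' X_uv0 setU0. Qed.

Lemma Ds_dominating : dominating e Ds.
Proof.
apply: greedy_removal_dominating; rewrite D'_eq.
case/andP: D_min => domD _; apply: exchange_dominating domD w_in_Du _ priv_open_sub_cnbr.
by rewrite inE line_sym euw orbT.
Qed.

Lemma Ds_sub : Ds \subset D :\ u :|: [set v].
Proof. by rewrite -D'_eq; apply: greedy_removal_sub. Qed.

Lemma v_in_Ds : v \in Ds.
Proof.
case/cnbrSP: (dominatingP _ _ Ds_dominating v) => x xDs vx.
by case/setUP: (subsetP Ds_sub x xDs) => [/v_not_cnbr/negP // | /set1P xv]; rewrite -xv.
Qed.

Lemma mem_Z z : (z \in Z) = (z \in D :\ u) && (z \notin Ds).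
Proof.
rewrite /Z /Z_uv D'_eq in_setD in_setU in_set1 andbC.
by case: eqVneq => [->|_]; rewrite ?v_in_Ds ?andbF ?orbF.
Qed.

Lemma Ds_sub_Dz z : z \in Z -> Ds :\ v \subset D :\ z.
Proof.
rewrite mem_Z => /andP[_ zDs]; apply/subsetP=> x /setD1P[xv xDs].
have /setUP[/setD1P[_ xD] | /set1P xv'] := subsetP Ds_sub x xDs.
  by rewrite !inE xD andbT; apply: contraNneq zDs => <-.
by rewrite xv' eqxx in xv.
Qed.

Lemma Z_dominated z : z \in Z -> exists2 x, x \in Ds :\ v & e x z.
Proof.
move=> zZ; have /andP[zDu zDs] : (z \in D :\ u) && (z \notin Ds) by rewrite -mem_Z.
case/cnbrSP: (dominatingP _ _ Ds_dominating z) => x xDs zx.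
have xz : x != z by apply: contraNneq zDs => <-.
have xv : x != v.
  by apply: contraNneq (v_not_cnbr zDu) => xv; rewrite line_cnbrC -xv.
by exists x; [rewrite !inE xv | move: zx; rewrite inE eq_sym (negbTE xz)].
Qed.

Lemma Z_priv z : z \in Z -> exists p, p \in priv_open e D z.
Proof.
move=> zZ; have /andP[/setD1P[_ zD] _] : (z \in D :\ u) && (z \notin Ds) by rewrite -mem_Z.
have [p /setDP[pz p_out]] := minimal_dominating_priv D_min zD.
have [x xDs exz] := Z_dominated zZ.
have pz' : p != z.
  apply: contraNneq p_out => ->; apply: cnbrS_cnbr (subsetP (Ds_sub_Dz zZ) x xDs) _.
  by rewrite inE exz orbT.
exists p; rewrite /priv_open /priv_closed in_setI in_setD pz p_out inE.
by move: pz; rewrite inE (negbTE pz').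
Qed.

Lemma priv_Z_in_Y z p : z \in Z -> p \in priv_open e D z -> p \in Y.
Proof.
move=> zZ /setIP[/setDP[_ p_out]]; rewrite inE => ezp.
have /andP[/setD1P[zu _] _] : (z \in D :\ u) && (z \notin Ds) by rewrite -mem_Z.
have p_Ds : p \notin cnbrS e (Ds :\ v).
  by apply: contra p_out; apply: (subsetP (cnbrSS _ (Ds_sub_Dz zZ))).
have p_u : p \notin cnbr e u.
  by apply: contra p_out; apply: cnbrS_cnbr; rewrite !inE eq_sym zu uD.
have pv : p \in cnbr e v.
  case/cnbrSP: (dominatingP _ _ Ds_dominating p) => x xDs px.
  have [xv | xv] := eqVneq x v; first by rewrite -xv.
  by case/negP: p_Ds; apply: cnbrS_cnbr px; rewrite !inE xv.
have epv : e v p.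
  move: pv; rewrite inE; case: eqVneq => [pv _ | //].
  by move: p_u; rewrite pv inE u_adj_v orbT.
by rewrite /Y /priv_open /priv_closed in_setD p_u in_setI in_setD pv p_Ds inE.
Qed.

Lemma mem_Y y : y \in Y -> [/\ e v y, y \notin cnbr e u & y \notin cnbrS e (Ds :\ v)].
Proof. by case/setDP=> /setIP[/setDP[_ y_out]]; rewrite inE. Qed.

Lemma Z_not_cnbr_v z : z \in Z -> z \notin cnbr e v.
Proof. by rewrite mem_Z line_cnbrC => /andP[/v_not_cnbr]. Qed.

(* [y1] and [y2] both contain the endpoint of [z] avoiding its dominator in [Ds],
   and the endpoint of [v] avoiding [u]; these differ as [z] and [v] are not adjacent. *)
Lemma Y_nbr_Z_uniq z y1 y2 : z \in Z -> y1 \in Y -> y2 \in Y -> e z y1 -> e z y2 -> y1 = y2.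
Proof.
move=> zZ /mem_Y[evy1 y1u y1Ds] /mem_Y[evy2 y2u y2Ds] ezy1 ezy2.
have [x xDs exz] := Z_dominated zZ.
have out_x y : y \notin cnbrS e (Ds :\ v) -> y \notin cnbr e x.
  by apply: contra; apply: cnbrS_cnbr.
have [t1 t1z t1y] := line_meet ezy1; have [t2 t2z t2y] := line_meet ezy2.
have [r1 r1v r1y] := line_meet evy1; have [r2 r2v r2y] := line_meet evy2.
have ezx : e z x by rewrite line_sym.
have Et := line_outer_nbr_endpoint ezx (out_x _ y1Ds) (out_x _ y2Ds) t1z t1y t2z t2y.
have evu : e v u by rewrite line_sym u_adj_v.
have Er := line_outer_nbr_endpoint evu y1u y2u r1v r1y r2v r2y.
have tr : t1 != r1.
  by apply: contraNneq (Z_not_cnbr_v zZ) => Etr; apply: line_cnbr r1v _; rewrite -Etr.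
by apply: line_eq tr t1y r1y _ _; rewrite ?Et ?Er.
Qed.

Lemma card_Y_nbr z : z \in Z -> #|[set y in Y | e z y]| = 1.
Proof.
move=> zZ; have [p pP] := Z_priv zZ.
have pY := priv_Z_in_Y zZ pP.
have ezp : e z p by case/setIP: pP => _; rewrite inE.
apply/eqP/cards1P; exists p; apply/setP=> y; rewrite in_set1 in_set.
by apply/andP/eqP=> [[yY ezy] | ->]; [apply: Y_nbr_Z_uniq ezy ezp | split].
Qed.

Lemma Y_dominated y : y \in Y -> exists2 z, z \in Z & e y z.
Proof.
move=> yY; have [evy yu yDs] := mem_Y yY.
case/andP: D_min => /dominatingP domD _; case/cnbrSP: (domD y) => x xD yx.
have xDu : x \in D :\ u by rewrite !inE xD andbT; apply: contraNneq yu => <-.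
have xDs : x \notin Ds.
  apply: contra yDs => xDs; apply: cnbrS_cnbr yx; rewrite !inE xDs andbT.
  by apply: contraNneq v_notin_D => <-; case/setD1P: xDu.
exists x; first by rewrite mem_Z xDu.
have yx' : y != x.
  by apply: contraNneq (v_not_cnbr xDu) => <-; rewrite line_cnbrC inE evy orbT.
by move: yx; rewrite inE (negbTE yx') line_sym.
Qed.

(* Both [z_i] contain the endpoint of [y] avoiding [v], so a private neighbour of [z1]
   would meet [z2] or the dominator of [z1] in [Ds]. *)
Lemma Z_nbr_Y_uniq y z1 z2 : y \in Y -> z1 \in Z -> z2 \in Z -> e y z1 -> e y z2 -> z1 = z2.
Proof.
move=> yY z1Z z2Z eyz1 eyz2; apply/eqP; apply: contraT => z12.
have [evy _ yDs] := mem_Y yY.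
have [t1 t1y t1z] := line_meet eyz1; have [t2 t2y t2z] := line_meet eyz2.
have eyv : e y v by rewrite line_sym.
have Et := line_outer_nbr_endpoint eyv (Z_not_cnbr_v z1Z) (Z_not_cnbr_v z2Z)
  t1y t1z t2y t2z.
have [x xDs exz] := Z_dominated z1Z.
have [s sx sz] := line_meet exz.
have ts : t1 != s.
  apply: contraNneq yDs => Ets; apply: cnbrS_cnbr xDs _.
  by apply: line_cnbr sx _; rewrite -Ets.
have [p pP] := Z_priv z1Z.
case/setIP: pP => /setDP[_ p_out]; rewrite inE => ezp.
have z2D : z2 \in D :\ z1.
  by move: z2Z; rewrite mem_Z => /andP[/setD1P[_ z2D] _]; rewrite !inE z2D andbT eq_sym.
have xD : x \in D :\ z1 := subsetP (Ds_sub_Dz z1Z) x xDs.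
case/negP: p_out; have := line_nbr_cover ts t1z (_ : t1 \in f z2) sz sx ezp.
by rewrite Et => /(_ t2z)/orP[]; apply: cnbrS_cnbr.
Qed.

Lemma card_Z_nbr y : y \in Y -> #|[set z in Z | e y z]| = 1.
Proof.
move=> yY; have [z zZ eyz] := Y_dominated yY.
apply/eqP/cards1P; exists z; apply/setP=> z'; rewrite in_set1 in_set.
by apply/andP/eqP=> [[z'Z eyz'] | ->]; [apply: Z_nbr_Y_uniq eyz' eyz | split].
Qed.

End Exchange.
End LineGraph.

Theorem lemma4 (n : nat) (e : rel 'I_n) (D : {set 'I_n}) (u w v : 'I_n) :
  is_line_graph e ->
  minimal_dominating e D ->
  u \in D -> w \in D -> e u w ->
  v \in priv_open e D u ->
  [/\ X_uv e D u v = set0,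
      (forall z, z \in Z_uv e D u v ->
         #|[set y in priv_open e (Dstar e D u v) v :\: cnbr e u | e z y]| = 1) &
      (forall y, y \in priv_open e (Dstar e D u v) v :\: cnbr e u ->
         #|[set z in Z_uv e D u v | e y z]| = 1)].
Proof.
move=> [m [eH [f [_ [f_inj f_edge _ e_meet]]]]] D_min uD wD euw v_priv.
have f_pair x : exists a b, f x = [set a; b].
  by have [a [b [_ fx]]] := f_edge x; exists a, b.
split.
- exact: (X_uv0 f_pair e_meet wD euw v_priv).
- move=> z; exact: (card_Y_nbr f_inj f_pair e_meet D_min uD wD euw v_priv).
- move=> y; exact: (card_Z_nbr f_pair e_meet D_min wD euw v_priv).
Qed.
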